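(* Let $b \geq 2$ be an integer and let $p$ be a prime number such that $p$ divides $b+1$. Then every extra-special $p$-group $G$ of order $p^{2b+1}$ admits a diagonal double Kodaira structure of strong type $(b,\,p)$.
   Context: Notation: for elements $x,y$ of a group, $[x,y]=xyx^{-1}y^{-1}$; $o(x)$ is the order of $x$; $\langle x_1,\dots,x_m\rangle$ is the subgroup generated. Definition (diagonal double Kodaira structure). Let $G$ be a finite group and $b,n\ge 2$ integers. A diagonal double Kodaira structure of type $(b,n)$ on $G$ is a set of $4b+1$ elements $\mathsf{r}_{11},\mathsf{t}_{11},\dots,\mathsf{r}_{1b},\mathsf{t}_{1b},\mathsf{r}_{21},\mathsf{t}_{21},\dots,\mathsf{r}_{2b},\mathsf{t}_{2b},\mathsf{z}$ which generate $G$, with $o(\mathsf{z})=n$, satisfying the following relations for all $j,k\in\{1,\dots,b\}$: (Surface relations) $[\mathsf{r}_{1b}^{-1},\mathsf{t}_{1b}^{-1}]\,\mathsf{t}_{1b}^{-1}\,[\mathsf{r}_{1,b-1}^{-1},\mathsf{t}_{1,b-1}^{-1}]\,\mathsf{t}_{1,b-1}^{-1}\cdots[\mathsf{r}_{11}^{-1},\mathsf{t}_{11}^{-1}]\,\mathsf{t}_{11}^{-1}\,(\mathsf{t}_{11}\mathsf{t}_{12}\cdots\mathsf{t}_{1b})=\mathsf{z}$, $[\mathsf{r}_{21}^{-1},\mathsf{t}_{21}]\,\mathsf{t}_{21}\,[\mathsf{r}_{22}^{-1},\mathsf{t}_{22}]\,\mathsf{t}_{22}\cdots[\mathsf{r}_{2b}^{-1},\mathsf{t}_{2b}]\,\mathsf{t}_{2b}\,(\mathsf{t}_{2b}^{-1}\mathsf{t}_{2,b-1}^{-1}\cdots\mathsf{t}_{21}^{-1})=\mathsf{z}^{-1}$.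 (Action of $\mathsf{r}_{1j}$) $[\mathsf{r}_{1j},\mathsf{r}_{2k}]=1$ if $j<k$; $[\mathsf{r}_{1j},\mathsf{r}_{2j}]=1$; $[\mathsf{r}_{1j},\mathsf{r}_{2k}]=\mathsf{z}^{-1}\mathsf{r}_{2k}\mathsf{r}_{2j}^{-1}\mathsf{z}\mathsf{r}_{2j}\mathsf{r}_{2k}^{-1}$ if $j>k$; $[\mathsf{r}_{1j},\mathsf{t}_{2k}]=1$ if $j<k$; $[\mathsf{r}_{1j},\mathsf{t}_{2j}]=\mathsf{z}^{-1}$; $[\mathsf{r}_{1j},\mathsf{t}_{2k}]=[\mathsf{z}^{-1},\mathsf{t}_{2k}]$ if $j>k$; $[\mathsf{r}_{1j},\mathsf{z}]=[\mathsf{r}_{2j}^{-1},\mathsf{z}]$. (Action of $\mathsf{t}_{1j}$) $[\mathsf{t}_{1j},\mathsf{r}_{2k}]=1$ if $j<k$; $[\mathsf{t}_{1j},\mathsf{r}_{2j}]=\mathsf{t}_{2j}^{-1}\mathsf{z}\mathsf{t}_{2j}$; $[\mathsf{t}_{1j},\mathsf{r}_{2k}]=[\mathsf{t}_{2j}^{-1},\mathsf{z}]$ if $j>k$; $[\mathsf{t}_{1j},\mathsf{t}_{2k}]=1$ if $j<k$; $[\mathsf{t}_{1j},\mathsf{t}_{2j}]=[\mathsf{t}_{2j}^{-1},\mathsf{z}]$; $[\mathsf{t}_{1j},\mathsf{t}_{2k}]=\mathsf{t}_{2j}^{-1}\mathsf{z}\mathsf{t}_{2j}\mathsf{z}^{-1}\mathsf{t}_{2k}\mathsf{z}\mathsf{t}_{2j}^{-1}\mathsf{z}^{-1}\mathsf{t}_{2j}\mathsf{t}_{2k}^{-1}$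 if $j>k$; $[\mathsf{t}_{1j},\mathsf{z}]=[\mathsf{t}_{2j}^{-1},\mathsf{z}]$. Such a structure is of strong type $(b,n)$ if both $K_1:=\langle \mathsf{r}_{11},\mathsf{t}_{11},\dots,\mathsf{r}_{1b},\mathsf{t}_{1b},\mathsf{z}\rangle$ and $K_2:=\langle \mathsf{r}_{21},\mathsf{t}_{21},\dots,\mathsf{r}_{2b},\mathsf{t}_{2b},\mathsf{z}\rangle$ equal $G$, and of non-strong type otherwise. Definition. For a prime $p$, a finite $p$-group $G$ is extra-special if its center $Z(G)$ is cyclic of order $p$ and $G/Z(G)$ is a non-trivial elementary abelian $p$-group. *)

From HB Require Import structures.
From mathcomp Require Import all_boot all_fingroup all_solvable.
Set Implicit Arguments. Unset Strict Implicit. Unset Printing Implicit Defensive.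

Local Open Scope group_scope.

Section DDKS.
Variable gT : finGroupType.

(* Paper's commutator convention: [x,y] = x y x^-1 y^-1
   (MathComp's [~ x, y] is x^-1 y^-1 x y, so we define our own). *)
Definition pcomm (x y : gT) : gT := x * y * x^-1 * y^-1.

Definition extra_special_pgroup (p : nat) (G : {group gT}) : Prop :=
  [/\ p.-group G, cyclic 'Z(G), #|'Z(G)| = p,
      p.-abelem (G / 'Z(G)) & (G / 'Z(G))%g != 1].

(* Indices j in {1..b} are represented by j : 'I_b (j <-> j+1). *)
Variables (b n : nat) (r1 t1 r2 t2 : 'I_b -> gT) (z : gT).

Definition K1set : {set gT} :=
  z |: ([set r1 i | i : 'I_b] :|: [set t1 i | i : 'I_b]).
Definition K2set : {set gT} :=
  z |: ([set r2 i | i : 'I_b] :|: [set t2 i | i : 'I_b]).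

Definition ddks_relations : Prop :=
  ((\prod_(i < b) (pcomm (r1 (rev_ord i))^-1 (t1 (rev_ord i))^-1
                    * (t1 (rev_ord i))^-1))
     * (\prod_(i < b) t1 i) = z)
  /\
  ((\prod_(i < b) (pcomm (r2 i)^-1 (t2 i) * t2 i))
     * (\prod_(i < b) (t2 (rev_ord i))^-1) = z^-1)
  /\
  (forall j k : 'I_b,
    ((j < k)%N -> pcomm (r1 j) (r2 k) = 1)
    /\ (pcomm (r1 j) (r2 j) = 1)
    /\ ((k < j)%N -> pcomm (r1 j) (r2 k)
                     = z^-1 * r2 k * (r2 j)^-1 * z * r2 j * (r2 k)^-1)
    /\ ((j < k)%N -> pcomm (r1 j) (t2 k) = 1)
    /\ (pcomm (r1 j) (t2 j) = z^-1)
    /\ ((k < j)%N -> pcomm (r1 j) (t2 k) = pcomm z^-1 (t2 k))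
    /\ (pcomm (r1 j) z = pcomm (r2 j)^-1 z)
    /\ ((j < k)%N -> pcomm (t1 j) (r2 k) = 1)
    /\ (pcomm (t1 j) (r2 j) = (t2 j)^-1 * z * t2 j)
    /\ ((k < j)%N -> pcomm (t1 j) (r2 k) = pcomm (t2 j)^-1 z)
    /\ ((j < k)%N -> pcomm (t1 j) (t2 k) = 1)
    /\ (pcomm (t1 j) (t2 j) = pcomm (t2 j)^-1 z)
    /\ ((k < j)%N -> pcomm (t1 j) (t2 k)
          = (t2 j)^-1 * z * t2 j * z^-1 * t2 k * z * (t2 j)^-1 * z^-1
              * t2 j * (t2 k)^-1)
    /\ (pcomm (t1 j) z = pcomm (t2 j)^-1 z)).

Definition ddks (G : {group gT}) : Prop :=
  [/\ 2 <= b, 2 <= n,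
      <<K1set :|: K2set>> = G,
      #[z] = n & ddks_relations].

Definition strong_ddks (G : {group gT}) : Prop :=
  [/\ ddks G, <<K1set>> = G & <<K2set>> = G].

End DDKS.

From HB Require Import structures.
From mathcomp Require Import all_boot all_fingroup all_solvable.
Set Implicit Arguments. Unset Strict Implicit. Unset Printing Implicit Defensive.
Local Open Scope group_scope.

(* An extra-special p-group G of order p^(2b+1) with centre <[z]> has a
   symplectic basis x_1, u_1, ..., x_b, u_b: together with z they generate G,
   and they pairwise commute except that [x_i, u_i] = z^-1.  It is found by induction,
   splitting off an extra-special central factor of order p^3 at each step
   (split1_extraspecial).  With r_1j = r_2j = x_j and t_1j = t_2j = u_j every
   action relation becomes an identity between commuting elements, and both
   surface relations reduce to z^-b = z, i.e. to z^(b+1) = 1, which holds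
   because p divides b+1. *)

Section PaperCommutator.
Variable gT : finGroupType.
Implicit Types x y : gT.

Lemma pcommE x y : pcomm x y = [~ x^-1, y^-1].
Proof. by rewrite /pcomm /commg /conjg !invgK !mulgA. Qed.

Lemma pcomm_mulgV x y : pcomm x y = (x * y) * (y * x)^-1.
Proof. by rewrite invMg !mulgA. Qed.

Lemma pcommP x y : reflect (commute x y) (pcomm x y == 1).
Proof. by rewrite pcomm_mulgV -eq_mulgV1; apply: eqP. Qed.

Lemma pcomm_commute x y : commute x y -> pcomm x y = 1.
Proof. by move/pcommP/eqP. Qed.

Lemma pcommC x y : pcomm y x = (pcomm x y)^-1.
Proof. by rewrite !pcomm_mulgV [RHS]invMg invgK. Qed.

Lemma mulg_pcomm x y : x * y = pcomm x y * (y * x).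
Proof. by rewrite pcomm_mulgV mulgKV. Qed.

Section CentralCommutator.
Variables x y : gT.
Let c := pcomm x y.
Hypotheses (cx : commute c x) (cy : commute c y).

Lemma pcommVV : pcomm x^-1 y^-1 = c.
Proof.
have cxy : commute c (x^-1 * y^-1) by apply: commuteM; apply: commuteV.
rewrite /pcomm !invgK -mulgA (mulg_pcomm x y) -/c mulgA -cxy -mulgA -invMg mulVg.
exact: mulg1.
Qed.

Lemma pcommV1 : pcomm x^-1 y = c^-1.
Proof.
have e : y * x = c^-1 * (x * y) by rewrite (mulg_pcomm x y) -/c mulKg.
have cxV : commute c^-1 x^-1 by apply/commuteV/commute_sym/commuteV.
by rewrite /pcomm invgK -(mulgA _ y x) e mulgA -cxV -(mulgA _ x^-1) mulKg mulgK.
Qed.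

Lemma pcommX n : pcomm x (y ^+ n) = c ^+ n.
Proof.
have conjX : x * y ^+ n * x^-1 = (c * y) ^+ n.
  elim: n => [|n IHn]; first by rewrite !expg0 mulg1 mulgV.
  by rewrite !expgSr -IHn /c /pcomm !mulgA mulgVK -!mulgA mulKg.
by rewrite /pcomm conjX expgMn ?mulgK.
Qed.

End CentralCommutator.
End PaperCommutator.

Section OrdinalProducts.
Variable gT : finGroupType.

Lemma prod_mulg_central n (c : gT) (h : 'I_n -> gT) :
  (forall i, commute c (h i)) ->
  \prod_(i < n) (c * h i) = c ^+ n * \prod_(i < n) h i.
Proof.
elim: n h => [|n IHn] h ch; first by rewrite !big_ord0 mulg1.
have cprod : commute c (\prod_(i < n) h (widen_ord (leqnSn n) i)).
  by apply: big_ind => // [|a d]; [exact: commute1 | exact: commuteM].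
rewrite !big_ord_recr /= IHn // expgSr !mulgA; congr (_ * _).
by rewrite -!mulgA cprod.
Qed.

Lemma prod_rev_ord_invg n (t : 'I_n -> gT) :
  \prod_(i < n) (t (rev_ord i))^-1 = (\prod_(i < n) t i)^-1.
Proof.
elim: n t => [|n IHn] t; first by rewrite !big_ord0 invg1.
rewrite big_ord_recl big_ord_recr /= invMg -IHn; congr (_ * _).
  by congr (t _)^-1; apply: val_inj; rewrite /= subn1.
apply: eq_bigr => i _; congr (t _)^-1; apply: val_inj.
by rewrite /= /bump /= add1n subSS.
Qed.

End OrdinalProducts.

Section SymplecticRelations.
Variables (gT : finGroupType) (b : nat) (z : gT) (x u : 'I_b -> gT).
Hypotheses (czx : forall i, commute z (x i)) (czu : forall i, commute z (u i)).
Hypothesis cxx : forall i j, commute (x i) (x j).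
Hypothesis cuu : forall i j, commute (u i) (u j).
Hypothesis cxu : forall i j, i != j -> commute (x i) (u j).
Hypothesis pcomm_xu : forall i, pcomm (x i) (u i) = z^-1.
Hypothesis zb : z ^+ b.+1 = 1.

Let cxz i : commute (x i) z. Proof. exact/commute_sym. Qed.
Let cuz i : commute (u i) z. Proof. exact/commute_sym. Qed.
Let cxVz i : commute (x i)^-1 z. Proof. exact/commute_sym/commuteV. Qed.
Let cuVz i : commute (u i)^-1 z. Proof. exact/commute_sym/commuteV. Qed.
Let czVx i : commute z^-1 (x i). Proof. exact/commute_sym/commuteV. Qed.
Let czVu i : commute z^-1 (u i). Proof. exact/commute_sym/commuteV. Qed.
Let conj_fix (a c : gT) : commute a c -> a ^ c = a.
Proof. by move=> ?; apply/conjg_fixP/commgP. Qed.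

Let pcomm_xVuV i : pcomm (x i)^-1 (u i)^-1 = z^-1.
Proof. by rewrite pcommVV pcomm_xu. Qed.

Let pcomm_xVu i : pcomm (x i)^-1 (u i) = z.
Proof. by rewrite pcommV1 pcomm_xu ?invgK. Qed.

Lemma symplectic_ddks_relations : ddks_relations x u x u z.
Proof.
split.
  rewrite (eq_bigr (fun i => z^-1 * (u (rev_ord i))^-1)) => [|i _]; last first.
    by rewrite pcomm_xVuV.
  rewrite prod_mulg_central => [|i]; last exact/commuteV/czVu.
  rewrite prod_rev_ord_invg mulgKV expgVn; apply/eqP.
  by rewrite eq_invg_mul -expgSr zb.
split.
  rewrite (eq_bigr (fun i => z * u i)) => [|i _]; last by rewrite pcomm_xVu.
  rewrite prod_mulg_central // prod_rev_ord_invg mulgK; apply/eqP.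
  by rewrite eq_sym eq_invg_mul -expgS zb.
move=> j k.
(* The right-hand sides of the relations for [r_1j, r_2k] and [t_1j, t_2k], k < j. *)
have xx_word : z^-1 * x k * (x j)^-1 * z * x j * (x k)^-1 = 1.
  rewrite -(mulgA z^-1) -(mulgA z^-1) -conjgE conj_fix ?mulgKV ?mulgV //.
  by apply/commute_sym/commuteM; last exact/commuteV.
have uu_word :
    (u j)^-1 * z * u j * z^-1 * u k * z * (u j)^-1 * z^-1 * u j * (u k)^-1 = 1.
  rewrite -(mulgA (u j)^-1) -conjgE conj_fix // mulgV mul1g -(mulgA (u k) z).
  by rewrite (commuteV (czu j)) mulgA mulgK mulgKV mulgV.
split; first by move=> _; exact/pcomm_commute.
split; first exact/pcomm_commute.
split; first by move=> _; rewrite pcomm_commute.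
split; first by move=> ltjk; apply/pcomm_commute/cxu; rewrite neq_ltn ltjk.
split; first exact: pcomm_xu.
split.
  move=> ltkj; rewrite (pcomm_commute (czVu k)) pcomm_commute //.
  by apply: cxu; rewrite neq_ltn ltkj orbT.
split; first by rewrite (pcomm_commute (cxz j)) (pcomm_commute (cxVz j)).
split.
  by move=> ltjk; apply/pcomm_commute/commute_sym/cxu; rewrite neq_ltn ltjk orbT.
split; first by rewrite pcommC pcomm_xu invgK -mulgA -conjgE conj_fix.
split.
  move=> ltkj; rewrite (pcomm_commute (cuVz j)) pcomm_commute //.
  by apply/commute_sym/cxu; rewrite neq_ltn ltkj.
split; first by move=> _; exact/pcomm_commute.
split; first by rewrite (pcomm_commute (cuVz j)) pcomm_commute.
split; first by move=> _; rewrite pcomm_commute.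
by rewrite (pcomm_commute (cuz j)) (pcomm_commute (cuVz j)).
Qed.
End SymplecticRelations.

Lemma extra_special_pgroup_extraspecial (gT : finGroupType) p (G : {group gT}) :
  prime p -> extra_special_pgroup p G -> extraspecial G.
Proof.
move=> p_pr [pG _ oZ abelQ ntQ].
have nZG : G \subset 'N('Z(G)) := normal_norm (center_normal G).
have sG'Z : G^`(1) \subset 'Z(G) := der1_min nZG (abelem_abelian abelQ).
have ntG' : G^`(1) != 1.
  apply: contra ntQ => /eqP/derG1P/center_idP abG.
  by apply/eqP/trivgP; rewrite quotient_sub1 //= abG.
have defG' : G^`(1) = 'Z(G).
  apply/eqP; rewrite eqEcard sG'Z oZ.
  have ntG'card : #|G^`(1)| != 1%N by rewrite -trivg_card1.
  have /(prime_nt_dvdP p_pr ntG'card) -> : #|G^`(1)| %| p by rewrite -oZ cardSg.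
  exact: leqnn.
split; last by rewrite oZ.
split=> //; apply/eqP; rewrite eqEsubset (Phi_min pG nZG abelQ) /=.
by rewrite -defG' (Phi_joing pG) joing_subl.
Qed.

Section SymplecticBasis.
Variable gT : finGroupType.

(* Families are indexed by nat (only i < k matters) so that the induction can
   extend them by one pair; the last clause says that S is generated by z and
   the family. *)
Definition symplectic_basis (S : {set gT}) (z : gT) (k : nat) (x u : nat -> gT) :=
  [/\ forall i, i < k -> x i \in S /\ u i \in S,
      forall i j, i < k -> j < k ->
        [/\ commute (x i) (x j), commute (u i) (u j)
           & (i != j -> commute (x i) (u j))],
      forall i, i < k -> pcomm (x i) (u i) = z^-1
    & forall H : {group gT},
        z \in H -> (forall i, i < k -> x i \in H /\ u i \in H) -> S \subset H].

Lemma extraspecial_pcomm_partner (E : {group gT}) x z :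
  extraspecial E -> z \in 'Z(E) -> x \in E :\: 'Z(E) ->
  exists2 u, u \in E & pcomm x u = z.
Proof.
move=> [[_ derE] primeZ] Zz /setDP[Ex notZx].
have /subsetPn[y Ey nCy] : ~~ (E \subset 'C[x]).
  by rewrite sub_cent1; apply: contra notZx => Cx; rewrite inE Ex.
pose c := pcomm x y.
have Zc : c \in 'Z(E) by rewrite -derE /c pcommE derg1 mem_commg ?groupV.
have c1 : c != 1 by apply: contra nCy => /pcommP cxy; apply/cent1P/commute_sym.
have [k ->] : exists k, z = c ^+ k.
  by apply/cycleP; rewrite -(nt_gen_prime primeZ) // in_setD1 c1.
exists (y ^+ k); first exact: groupX.
by have [_ cEc] := centerP _ _ Zc; rewrite pcommX //; apply: cEc.
Qed.

Lemma noncommuting_pair_gen_p3group (E : {group gT}) p x u :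
  prime p -> #|E| = (p ^ 3)%N -> x \in E -> u \in E -> ~ commute x u ->
  <<[set x; u]>> = E.
Proof.
move=> p_pr oE Ex Eu ncxu; pose A := <<[set x; u]>>%G.
have sAE : A \subset E by rewrite gen_subG subUset !sub1set Ex Eu.
have pA : p.-group A by apply: pgroupS sAE _; rewrite /pgroup oE pnatX pnat_id.
have ncA : ~~ abelian A.
  apply/negP => /centsP cA; apply: ncxu.
  by apply: cA; rewrite mem_gen // !inE eqxx ?orbT.
have logA : 2 < logn p #|A| by rewrite ltnNge; apply: contra ncA; apply: p2group_abelian.
apply/eqP; rewrite eqEcard sAE oE (card_pgroup pA) leq_exp2l //.
exact: prime_gt1.
Qed.

Lemma symplectic_basis_cprod (S E R : {group gT}) z x0 u0 k (x u : nat -> gT) :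
    E \* R = S -> x0 \in E -> u0 \in E -> pcomm x0 u0 = z^-1 ->
    <<[set x0; u0]>> = E -> symplectic_basis R z k x u ->
  symplectic_basis S z k.+1 (fun i => if i == k then x0 else x i)
                            (fun i => if i == k then u0 else u i).
Proof.
move=> defS Ex0 Eu0 pcomm0 genE [memR commR pcommR genR].
have [_ defER cRE] := cprodP defS.
have sES : E \subset S by rewrite -defER mulG_subl.
have sRS : R \subset S by rewrite -defER mulG_subr.
have cER a c : a \in E -> c \in R -> commute a c.
  by move=> Ea Rc; apply/esym/(centP (subsetP cRE c Rc)).
have ltk i : i < k.+1 -> i != k -> i < k by rewrite ltnS ltn_neqAle => -> ->.
split.
- move=> i lt_i; case: eqVneq => [_ | ne]; first by rewrite !(subsetP sES).
  by have [Rx Ru] := memR i (ltk i lt_i ne); rewrite !(subsetP sRS).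
- move=> i j lt_i lt_j.
  case: (eqVneq i k) => [-> | ne_i]; case: (eqVneq j k) => [_ | ne_j] //.
  + have [Rx Ru] := memR j (ltk j lt_j ne_j).
    by split => [||_]; apply: cER.
  + have [Rx Ru] := memR i (ltk i lt_i ne_i).
    by split => [||_]; apply/esym/cER.
  + exact: commR (ltk i lt_i ne_i) (ltk j lt_j ne_j).
- by move=> i lt_i; case: eqVneq => [// | ne]; apply: pcommR (ltk i lt_i ne).
move=> H Hz genH.
have [x0H u0H] := genH k (ltnSn k); rewrite eqxx in x0H u0H.
have sRH : R \subset H.
  by apply: genR => // i lt_ik; have := genH i (leqW lt_ik); rewrite ltn_eqF.
have sEH : E \subset H by rewrite -genE gen_subG subUset !sub1set x0H u0H.
by rewrite -defER mul_subG.
Qed.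

Lemma symplectic_basis_exists p z (S : {group gT}) :
    prime p -> #[z] = p -> p.-group S -> 'Z(S) = <[z]> ->
    extraspecial S \/ S :=: 'Z(S) ->
  exists k x u, #|S| = (p ^ (2 * k).+1)%N /\ symplectic_basis S z k x u.
Proof.
move=> p_pr oz; have [m] := ubnP #|S|.
elim: m S => // m IHm S leSm pS defZ [esS | SZ]; last first.
  exists 0, (fun=> 1), (fun=> 1).
  split; first by rewrite SZ defZ -orderE oz expn1.
  by split=> // H Hz _; rewrite SZ defZ cycle_subG.
have [x0 Z'x0] : {x0 | x0 \in S :\: 'Z(S)}.
  apply/sigW/set0Pn; rewrite -subset0 subDset setU0.
  apply: contra (extraspecial_nonabelian esS) => sSZ.
  exact: abelianS sSZ (center_abelian S).
have [E [R [[oE oR] [defS tiER] [defZE defZR] [esE Ex0] esR]]] :=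
  split1_extraspecial pS esS Z'x0.
have [u0 Eu0 pcomm0] : exists2 u0, u0 \in E & pcomm x0 u0 = z^-1.
  have Z'x0E : x0 \in E :\: 'Z(E).
    by rewrite defZE in_setD Ex0 andbT; case/setDP: Z'x0.
  by apply: extraspecial_pcomm_partner Z'x0E => //; rewrite defZE defZ groupV cycle_id.
have genE : <<[set x0; u0]>> = E.
  apply: (noncommuting_pair_gen_p3group p_pr oE Ex0 Eu0) => /pcomm_commute.
  rewrite pcomm0 => /eqP; rewrite eq_invg1 -order_eq1 oz => /eqP p1.
  by rewrite p1 in p_pr.
have [_ defER _] := cprodP defS.
have sRS : R \subset S by rewrite -defER mulG_subr.
have ltRm : #|R| < m.
  rewrite ltnS in leSm; apply: leq_trans leSm.
  by rewrite oR ltn_Pdiv ?cardG_gt0 // (ltn_exp2l 0) // prime_gt1.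
have esR' : extraspecial R \/ R :=: 'Z(R).
  by move: esR; rewrite defZR; case: ifP => _; [right | left].
have [k [x [u [oR' basisR]]]] :=
  IHm R ltRm (pgroupS sRS pS) (etrans defZR defZ) esR'.
exists k.+1, (fun i => if i == k then x0 else x i).
exists (fun i => if i == k then u0 else u i).
split; last exact: symplectic_basis_cprod defS Ex0 Eu0 pcomm0 genE basisR.
have := mul_cardG E R; rewrite defER tiER defZE defZ -orderE oz oE oR' => oEoR.
apply/eqP; rewrite -(eqn_pmul2r (prime_gt0 p_pr)) -oEoR -expnSr -expnD.
by rewrite mulnS !addSn !addnS.
Qed.

Lemma symplectic_basis_gen (S : {group gT}) z k x u :
  z \in S -> symplectic_basis S z k x u ->
  <<K1set (fun i : 'I_k => x i) (fun i => u i) z>> = S.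
Proof.
move=> Sz [memS _ _ genS]; apply/eqP; rewrite eqEsubset; apply/andP; split.
  rewrite gen_subG; apply/subsetP => w; rewrite in_setU1 in_setU.
  by case/or3P=> [/eqP-> | /imsetP[i _ ->] | /imsetP[i _ ->]] //; case: (memS i).
apply: genS => [|i lt_ik]; first by rewrite mem_gen // setU11.
split; apply: mem_gen; rewrite in_setU1 in_setU; apply/or3P.
  by apply: Or32; apply/imsetP; exists (Ordinal lt_ik).
by apply: Or33; apply/imsetP; exists (Ordinal lt_ik).
Qed.

Lemma symplectic_basis_ddks_relations (S : {group gT}) z k x u :
  z \in 'Z(S) -> z ^+ k.+1 = 1 -> symplectic_basis S z k x u ->
  ddks_relations (fun i : 'I_k => x i) (fun i => u i) (fun i => x i) (fun i => u i) z.
Proof.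
move=> Zz zk [memS commS pcommS _]; have [_ cSz] := centerP _ _ Zz.
apply: symplectic_ddks_relations => // [i | i | i j | i j | i j ne | i].
- exact/cSz/(memS i (ltn_ord i)).1.
- exact/cSz/(memS i (ltn_ord i)).2.
- by case: (commS i j (ltn_ord i) (ltn_ord j)).
- by case: (commS i j (ltn_ord i) (ltn_ord j)).
- by case: (commS i j (ltn_ord i) (ltn_ord j)) => _ _; apply.
exact: pcommS.
Qed.
End SymplecticBasis.

Theorem theorem2p7 (b p : nat) (gT : finGroupType) (G : {group gT}) :
  2 <= b -> prime p -> p %| b.+1 ->
  extra_special_pgroup p G -> #|G| = (p ^ (2 * b).+1)%N ->
  exists (r1 t1 r2 t2 : 'I_b -> gT) (z : gT),
    strong_ddks p r1 t1 r2 t2 z G.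
Proof.
move=> b2 p_pr p_dvd esG oG; have [pG cycZ oZ _ _] := esG.
have [z defZ] := cyclicP cycZ.
have oz : #[z] = p by rewrite orderE -defZ oZ.
have Zz : z \in 'Z(G) by rewrite defZ cycle_id.
have [k [x [u [oGk basis]]]] := symplectic_basis_exists p_pr oz pG defZ
  (or_introl (extra_special_pgroup_extraspecial p_pr esG)).
have /eqP kb : k == b.
  have : (p ^ (2 * k).+1 == p ^ (2 * b).+1)%N by rewrite -oGk oG.
  by rewrite eqn_exp2l ?prime_gt1 // eqSS eqn_mul2l.
subst k; have zb : z ^+ b.+1 = 1 by apply/eqP; rewrite -order_dvdn oz.
have genG := symplectic_basis_gen (subsetP (center_sub G) z Zz) basis.
exists (fun i => x i), (fun i => u i), (fun i => x i), (fun i => u i), z.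
split=> //; split=> //; first exact: prime_gt1.
  by rewrite setUid.
exact: symplectic_basis_ddks_relations Zz zb basis.
Qed.
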